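(* Let $F$ be a positive integer that is not a multiple of $3$. The number of maximal embedding dimension numerical semigroups with multiplicity $3$ and Frobenius number $F$ is $\left\lfloor\frac{F+1}{3}\right\rfloor - \left\lceil \frac{F+2}{6}\right\rceil + 1$.
   Context: A numerical semigroup is a subset $S \subseteq \mathbb{N}$ containing $0$, closed under addition, with $\mathbb{N}\setminus S$ finite. Its multiplicity is $\min(S\setminus\{0\})$, its Frobenius number is the largest integer not in $S$, and its embedding dimension is the cardinality of its unique minimal system of generators. $S$ is of maximal embedding dimension if its embedding dimension equals its multiplicity. *)

From mathcomp Require Import all_boot all_order all_algebra.
Set Implicit Arguments. Unset Strict Implicit. Unset Printing Implicit Defensive.

Definition numerical_semigroup (S : pred nat) : Prop :=
  [/\ S 0,
      (forall a b, S a -> S b -> S (a + b)) &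
      exists N, forall n, N <= n -> S n].

Definition is_multiplicity (S : pred nat) (m : nat) : Prop :=
  [/\ 0 < m, S m & forall k, 0 < k < m -> ~~ S k].

Definition is_frobenius (S : pred nat) (F : nat) : Prop :=
  ~~ S F /\ forall n, F < n -> S n.

Definition in_monoid_gen (G : seq nat) (n : nat) : Prop :=
  exists c : seq nat, size c = size G /\
    n = \sum_(i < size G) nth 0 c i * nth 0 G i.

Definition generates (G : seq nat) (S : pred nat) : Prop :=
  forall n, S n <-> in_monoid_gen G n.

Definition minimal_generating_system (G : seq nat) (S : pred nat) : Prop :=
  [/\ uniq G, generates G S &
      forall G' : seq nat, {subset G' <= G} -> generates G' S -> {subset G <= G'}].

Definition is_embedding_dimension (S : pred nat) (e : nat) : Prop :=
  exists G, minimal_generating_system G S /\ size G = e.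

Definition MED_with_multiplicity (S : pred nat) (m : nat) : Prop :=
  is_multiplicity S m /\ is_embedding_dimension S m.

(* Encoding: a subset A of {0,..,F} determines the subset of N that agrees
   with A on {0,..,F} and contains every n > F.  Every numerical semigroup
   with Frobenius number F is of this form (extensionally), and distinct A
   give distinct subsets of N. *)
Definition lift_set (F : nat) (A : {set 'I_F.+1}) : pred nat :=
  fun n => if n <= F then (inord n : 'I_F.+1) \in A else true.

From mathcomp Require Import all_boot all_order all_algebra zify.
Set Implicit Arguments. Unset Strict Implicit. Unset Printing Implicit Defensive.
Import GRing.Theory Num.Theory.

(* A numerical semigroup S containing 3 is determined by its Apery set
   {0, w1, w2} with respect to 3, where wi is the least element of S congruent
   to i mod 3: S consists of the multiples of 3 and of the n >= wi with
   n = i mod 3.  Closure under addition amounts to w2 <= 2 w1 and w1 <= 2 w2,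
   and w1, w2 are both minimal generators (embedding dimension 3) exactly when
   these inequalities are strict; the Frobenius number is max(w1, w2) - 3.
   So for F = 1 mod 3 one must take w1 = F + 3 and w2 = 2 mod 3 in the open
   interval ((F + 3) / 2, F + 3), symmetrically for F = 2 mod 3, and counting
   these values gives the formula. *)

Section Atoms.
Variable S : pred nat.
Hypothesis S0 : S 0.
Hypothesis SD : forall a b, S a -> S b -> S (a + b).

Lemma memMn k x : S x -> S (k * x).
Proof. by move=> Sx; elim: k => [|k IHk]; rewrite ?mul0n // mulSn SD. Qed.

Lemma mem_sum n (f : nat -> nat) :
  (forall i, i < n -> S (f i)) -> S (\sum_(i < n) f i).
Proof.
elim: n => [|n IHn] Sf; first by rewrite big_ord0.
by rewrite big_ord_recr SD ?Sf // IHn // => i lt_in; rewrite Sf // ltnW.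
Qed.

Definition atom x :=
  [/\ S x, 0 < x & forall a b, S a -> S b -> 0 < a -> 0 < b -> a + b <> x].

Lemma atom_sum x n (f : nat -> nat) : atom x ->
  (forall i, i < n -> S (f i)) -> \sum_(i < n) f i = x -> exists2 i, i < n & f i = x.
Proof.
case=> _ x_gt0 x_irr; elim: n => [|n IHn] Sf; first by rewrite big_ord0 => x0; lia.
rewrite big_ord_recr /= => sum_x.
have Sf' i : i < n -> S (f i) by move=> lt_in; rewrite Sf // ltnW.
have [fn0 | fn_gt0] := posnP (f n).
  by rewrite fn0 addn0 in sum_x; have [i lt_in <-] := IHn Sf' sum_x; exists i; lia.
have [sum0 | sum_gt0] := posnP (\sum_(i < n) f i); first by exists n; rewrite // -sum_x sum0.
by case: (x_irr _ _ (mem_sum Sf') (Sf n (ltnSn n)) sum_gt0 fn_gt0).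
Qed.

Lemma generates_mem G i : generates G S -> i < size G -> S (nth 0 G i).
Proof.
move=> genG lt_iG; apply/genG; exists (mkseq (fun j => (j == i) : nat) (size G)).
split; first by rewrite size_mkseq.
rewrite (bigD1 (Ordinal lt_iG)) //= big1 ?addn0 => [|j ne_ji].
  by rewrite nth_mkseq // eqxx mul1n.
by rewrite nth_mkseq // (negbTE (ne_ji : val j != i)) mul0n.
Qed.

Lemma atom_in_generators G x : generates G S -> atom x -> x \in G.
Proof.
move=> genG atom_x; have [Sx x_gt0 x_irr] := atom_x.
have [c [size_c x_sum]] := (genG x).1 Sx.
have Sterm i : i < size G -> S (nth 0 c i * nth 0 G i).
  by move=> lt_iG; apply/memMn/generates_mem.
have [i lt_iG term_x] := atom_sum atom_x Sterm (esym x_sum).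
have SGi := generates_mem genG lt_iG.
have [ci_gt1 | ci_le1] := ltnP 1 (nth 0 c i).
  (* x = g + (c - 1) g would be a proper decomposition *)
  case: (x_irr (nth 0 G i) ((nth 0 c i).-1 * nth 0 G i)) => //; try nia.
  exact: memMn.
have ci1 : nth 0 c i = 1 by nia.
by rewrite -term_x ci1 mul1n mem_nth.
Qed.

Lemma embedding_dimension_le_atoms e G : is_embedding_dimension S e ->
  generates G S -> (forall x, x \in G -> atom x) -> e <= size G.
Proof.
move=> [G0 [[uniq_G0 genG0 minG0] <-]] genG atomG.
have subG0 : {subset G <= G0} by move=> x /atomG; apply: atom_in_generators.
exact: uniq_leq_size uniq_G0 (minG0 G subG0 genG).
Qed.

End Atoms.

Lemma in_monoid_gen2 a b n : in_monoid_gen [:: a; b] n <-> exists x y, n = x * a + y * b.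
Proof.
split=> [[c [size_c ->]] | [x [y ->]]].
  case: c size_c => [|x [|y [|? ?]]] //= _.
  by exists x, y; rewrite !big_ord_recl big_ord0 /=; lia.
by exists [:: x; y]; split=> //; rewrite !big_ord_recl big_ord0 /=; lia.
Qed.

Lemma in_monoid_gen3 a b c n :
  in_monoid_gen [:: a; b; c] n <-> exists x y z, n = x * a + y * b + z * c.
Proof.
split=> [[cs [size_cs ->]] | [x [y [z ->]]]].
  case: cs size_cs => [|x [|y [|z [|? ?]]]] //= _.
  by exists x, y, z; rewrite !big_ord_recl big_ord0 /=; lia.
by exists [:: x; y; z]; split=> //; rewrite !big_ord_recl big_ord0 /=; lia.
Qed.

Definition apery3 (w1 w2 : nat) : pred nat := fun n =>
  [|| n %% 3 == 0, (n %% 3 == 1) && (w1 <= n) | (n %% 3 == 2) && (w2 <= n)].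

Section Apery3.
Variables (S : pred nat) (w1 w2 : nat).
Hypothesis S_apery : S =1 apery3 w1 w2.
Hypotheses (w1_mod : w1 %% 3 = 1) (w2_mod : w2 %% 3 = 2).

Lemma apery3_addr_closed : w2 <= 2 * w1 -> w1 <= 2 * w2 ->
  forall a b, S a -> S b -> S (a + b).
Proof. by move=> le_w21 le_w12 a b; rewrite !S_apery /apery3; lia. Qed.

Lemma apery3_atom3 : 3 < w1 -> 3 < w2 -> atom S 3.
Proof. by split=> [||a b]; rewrite ?S_apery /apery3; lia. Qed.

Lemma apery3_atom_w1 : w1 < 2 * w2 -> atom S w1.
Proof. by split=> [||a b]; rewrite ?S_apery /apery3; lia. Qed.

Lemma apery3_atom_w2 : w2 < 2 * w1 -> atom S w2.
Proof. by split=> [||a b]; rewrite ?S_apery /apery3; lia. Qed.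

Lemma apery3_generates : w2 <= 2 * w1 -> w1 <= 2 * w2 -> generates [:: 3; w1; w2] S.
Proof.
move=> le_w21 le_w12 n; have SD := apery3_addr_closed le_w21 le_w12.
have S0 : S 0 by rewrite S_apery.
rewrite in_monoid_gen3; split=> [| [x [y [z ->]]]].
  rewrite S_apery /apery3 => apery_n.
  have [n0 | [n1 | n2]] : n %% 3 = 0 \/ n %% 3 = 1 \/ n %% 3 = 2 by lia.
  - by exists (n %/ 3), 0, 0; lia.
  - by exists ((n - w1) %/ 3), 1, 0; lia.
  - by exists ((n - w2) %/ 3), 0, 1; lia.
by rewrite !SD ?memMn // S_apery /apery3; lia.
Qed.

Lemma apery3_generates_w1 : w2 = 2 * w1 -> generates [:: 3; w1] S.
Proof.
move=> w2E n; rewrite (apery3_generates _ _ n) ?in_monoid_gen3 ?in_monoid_gen2; try lia.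
split=> [[x [y [z ->]]] | [x [y ->]]]; first by exists x, (y + 2 * z); lia.
by exists x, y, 0; lia.
Qed.

Lemma apery3_generates_w2 : w1 = 2 * w2 -> generates [:: 3; w2] S.
Proof.
move=> w1E n; rewrite (apery3_generates _ _ n) ?in_monoid_gen3 ?in_monoid_gen2; try lia.
split=> [[x [y [z ->]]] | [x [y ->]]]; first by exists x, (2 * y + z); lia.
by exists x, 0, y; lia.
Qed.

Lemma apery3_frobenius F : is_frobenius S F <-> maxn w1 w2 = F + 3.
Proof.
split=> [[notSF S_gtF] | maxE].
  have := S_gtF (F + 1); have := S_gtF (F + 2); have := S_gtF (F + 3).
  by move: notSF; rewrite !S_apery /apery3; lia.
by split=> [|n]; rewrite S_apery /apery3; lia.
Qed.

End Apery3.

Lemma mult3_apery S : numerical_semigroup S -> S 3 -> exists w1 w2,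
  [/\ w1 %% 3 = 1, w2 %% 3 = 2, w2 <= 2 * w1, w1 <= 2 * w2 & S =1 apery3 w1 w2].
Proof.
case=> S0 SD [N SN] S3.
have mod3_mem r : r < 3 -> exists n, (n %% 3 == r) && S n.
  by move=> lt_r3; exists (3 * N + r); rewrite SN; lia.
have [w1 /andP[/eqP w1_mod Sw1] w1_min] := ex_minnP (mod3_mem 1 isT).
have [w2 /andP[/eqP w2_mod Sw2] w2_min] := ex_minnP (mod3_mem 2 isT).
exists w1, w2; split=> //.
- by have := w2_min (w1 + w1); rewrite SD //; lia.
- by have := w1_min (w2 + w2); rewrite SD //; lia.
move=> n; apply/idP/idP => [Sn | ].
  by have := w1_min n; have := w2_min n; rewrite Sn /apery3; lia.
rewrite /apery3 => apery_n.
have [n0 | [n1 | n2]] : n %% 3 = 0 \/ n %% 3 = 1 /\ w1 <= n \/ n %% 3 = 2 /\ w2 <= n by lia.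
- rewrite (_ : n = n %/ 3 * 3); [exact: memMn | lia].
- rewrite (_ : n = (n - w1) %/ 3 * 3 + w1); [by rewrite SD ?memMn | lia].
- rewrite (_ : n = (n - w2) %/ 3 * 3 + w2); [by rewrite SD ?memMn | lia].
Qed.

Definition med3_apery (F w1 w2 : nat) : Prop :=
  [/\ w1 %% 3 = 1, w2 %% 3 = 2, w2 < 2 * w1, w1 < 2 * w2 & maxn w1 w2 = F + 3].

Lemma apery3_is_med3 F S w1 w2 : med3_apery F w1 w2 -> S =1 apery3 w1 w2 ->
  numerical_semigroup S /\ MED_with_multiplicity S 3 /\ is_frobenius S F.
Proof.
move=> [w1_mod w2_mod lt_w21 lt_w12 maxE] S_apery.
have S0 : S 0 by rewrite S_apery.
have SD := apery3_addr_closed S_apery w1_mod w2_mod (ltnW lt_w21) (ltnW lt_w12).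
have [w1_gt3 w2_gt3] : 3 < w1 /\ 3 < w2 by lia.
split; [split | split; [split | exact/(apery3_frobenius S_apery)]] => //.
- by exists (F + 1) => n; rewrite S_apery /apery3; lia.
- by split=> [||k]; rewrite ?S_apery /apery3; lia.
exists [:: 3; w1; w2]; split=> //; split; first by rewrite /= !inE; lia.
  by apply: apery3_generates => //; apply: ltnW.
move=> G _ genG x; rewrite !inE => /or3P[]/eqP->; apply: (atom_in_generators S0 SD genG).
- exact: apery3_atom3.
- exact: apery3_atom_w1.
- exact: apery3_atom_w2.
Qed.

Lemma med3_is_apery3 F S : numerical_semigroup S -> MED_with_multiplicity S 3 ->
  is_frobenius S F -> exists w1 w2, med3_apery F w1 w2 /\ S =1 apery3 w1 w2.
Proof.
move=> numS [[_ S3 S_lt3] embS] frobS; have [S0 SD _] := numS.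
have [w1 [w2 [w1_mod w2_mod le_w21 le_w12 S_apery]]] := mult3_apery numS S3.
have [w1_gt3 w2_gt3] : 3 < w1 /\ 3 < w2.
  by move: (S_lt3 1 isT) (S_lt3 2 isT); rewrite !S_apery /apery3; lia.
have atom3 := apery3_atom3 S_apery w1_mod w2_mod w1_gt3 w2_gt3.
have embS_le := embedding_dimension_le_atoms S0 SD embS.
have lt_w21 : w2 < 2 * w1.
  rewrite ltn_neqAle le_w21 andbT; apply/eqP => w2E.
  have atom_w1 : atom S w1 by apply: apery3_atom_w1 => //; lia.
  suff : 3 <= size [:: 3; w1] by [].
  apply: embS_le (apery3_generates_w1 S_apery w1_mod w2_mod w2E) _ => x.
  by rewrite !inE => /orP[]/eqP->.
have lt_w12 : w1 < 2 * w2.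
  rewrite ltn_neqAle le_w12 andbT; apply/eqP => w1E.
  have atom_w2 : atom S w2 by apply: apery3_atom_w2 => //; lia.
  suff : 3 <= size [:: 3; w2] by [].
  apply: embS_le (apery3_generates_w2 S_apery w1_mod w2_mod w1E) _ => x.
  by rewrite !inE => /orP[]/eqP->.
by exists w1, w2; split=> //; split=> //; apply/(apery3_frobenius S_apery).
Qed.

Definition med3_pairs (F : nat) : seq (nat * nat) :=
  let q := F %/ 3 in
  if F %% 3 == 1 then [seq (F + 3, 3 * j + 2) | j <- iota (q %/ 2).+1 (q - q %/ 2)]
  else [seq (3 * j + 1, F + 3) | j <- iota (q.+1 %/ 2).+1 (q.+1 - q.+1 %/ 2)].

Lemma mem_med3_pairs F w1 w2 : ~~ (3 %| F) ->
  (w1, w2) \in med3_pairs F <-> med3_apery F w1 w2.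
Proof.
rewrite /dvdn /med3_pairs /= => F_mod; case: ifP => /eqP F_mod1; split.
- by case/mapP=> j; rewrite mem_iota => j_range [-> ->]; split; lia.
- case=> *; apply/mapP; exists ((w2 - 2) %/ 3); first by rewrite mem_iota; lia.
  by apply/pair_equal_spec; split; lia.
- by case/mapP=> j; rewrite mem_iota => j_range [-> ->]; split; lia.
- case=> *; apply/mapP; exists ((w1 - 1) %/ 3); first by rewrite mem_iota; lia.
  by apply/pair_equal_spec; split; lia.
Qed.

Lemma med3_pairs_uniq F : uniq (med3_pairs F).
Proof.
by rewrite /med3_pairs; case: ifP => _; rewrite map_inj_uniq ?iota_uniq // => i j []; lia.
Qed.

Lemma size_med3_pairs F : ~~ (3 %| F) ->
  ((size (med3_pairs F))%:Z = ((F + 1) %/ 3)%:Z - ((F + 7) %/ 6)%:Z + 1)%R.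
Proof.
by rewrite /dvdn /med3_pairs /= => F_mod; case: ifP; rewrite size_map size_iota; lia.
Qed.

Definition apery3_code F w1 w2 : {set 'I_F.+1} := [set i : 'I_F.+1 | apery3 w1 w2 i].

Lemma lift_apery3_code F w1 w2 : med3_apery F w1 w2 ->
  lift_set (apery3_code F w1 w2) =1 apery3 w1 w2.
Proof.
case=> w1_mod w2_mod _ _ maxE n; rewrite /lift_set; case: leqP => [le_nF | lt_Fn].
  by rewrite inE inordK.
by rewrite /apery3; lia.
Qed.

Lemma apery3_inj w1 w2 v1 v2 : w1 %% 3 = 1 -> w2 %% 3 = 2 -> v1 %% 3 = 1 -> v2 %% 3 = 2 ->
  apery3 w1 w2 =1 apery3 v1 v2 -> (w1, w2) = (v1, v2).
Proof.
move=> w1_mod w2_mod v1_mod v2_mod eq_apery.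
have le_v1 : v1 <= w1 by move: (eq_apery w1); rewrite /apery3; lia.
have le_w1 : w1 <= v1 by move: (eq_apery v1); rewrite /apery3; lia.
have le_v2 : v2 <= w2 by move: (eq_apery w2); rewrite /apery3; lia.
have le_w2 : w2 <= v2 by move: (eq_apery v2); rewrite /apery3; lia.
by apply/pair_equal_spec; split; apply/anti_leq/andP.
Qed.

Theorem mainTheorem6 (F : nat) (hF : 0 < F) (h3 : ~~ (3 %| F)) :
  exists s : seq {set 'I_F.+1},
    [/\ uniq s,
        (forall S : pred nat,
           (numerical_semigroup S /\ MED_with_multiplicity S 3 /\ is_frobenius S F)
           <-> exists2 A, A \in s & S =1 lift_set A) &
        ((size s)%:Z = ((F + 1) %/ 3)%:Z - ((F + 7) %/ 6)%:Z + 1)%R].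
Proof.
(* [hF] is implied by [h3]. *)
exists [seq apery3_code F p.1 p.2 | p <- med3_pairs F]; split.
- rewrite map_inj_in_uniq ?med3_pairs_uniq // => -[w1 w2] [v1 v2].
  move=> /(mem_med3_pairs _ _ h3) med_w /(mem_med3_pairs _ _ h3) med_v /= eq_code.
  have [[w1_mod w2_mod _ _ _] [v1_mod v2_mod _ _ _]] := (med_w, med_v).
  apply: apery3_inj => // n.
  by rewrite -(lift_apery3_code med_w) -(lift_apery3_code med_v) eq_code.
- move=> S; split=> [[numS [medS frobS]] | [_ /mapP[[w1 w2] med_w ->] S_code]].
    have [w1 [w2 [med_w S_apery]]] := med3_is_apery3 numS medS frobS.
    exists (apery3_code F w1 w2); last by move=> n; rewrite S_apery lift_apery3_code.
    by apply/mapP; exists (w1, w2) => //; apply/mem_med3_pairs.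
  have /(mem_med3_pairs _ _ h3) med3_w := med_w.
  by apply: (apery3_is_med3 med3_w) => n; rewrite S_code lift_apery3_code.
- by rewrite size_map size_med3_pairs.
Qed.
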